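(* Let $\mathcal{L}$ be a finite collection of non-vertical lines in $\mathbb{R}^3$ in general position, and let $C$ be a cycle of $\mathcal{L}$ whose projection $C^*$ is self-crossing. Then there is a cycle $C_0$ formed by a proper subset of the lines of $C$ (so with fewer lines than $C$) such that $C_0^*\subseteq C^*$ and every non-vertical edge of $\pi(C_0)$ is contained in a non-vertical edge of $\pi(C)$. Consequently, every cycle $C$ of $\mathcal{L}$ admits a simple cycle $C_0$ with this property, and any finite set of points on the lines of $\mathcal{L}$ that eliminates every simple cycle of $\mathcal{L}$ eliminates every cycle of $\mathcal{L}$.
   Context: A collection $\mathcal{L}$ of non-vertical lines in $\mathbb{R}^3$ is in general position if no two lines intersect, the $xy$-projections of no two lines are parallel, and the $xy$-projections of no three lines pass through a common point. For $\ell,\ell'\in\mathcal{L}$, write $\ell'\prec\ell$ if the unique vertical line meeting both meets $\ell$ at a higher point than $\ell'$. A $k$-cycle ($k\ge3$) is a cyclic sequence of distinct lines $\ell_1\prec\cdots\prec\ell_k\prec\ell_1$. For each $i$ (indices mod $k$), let $v_i^+\in\ell_i$ and $v_{i+1}^-\in\ell_{i+1}$ be the unique pair of points on these lines lying on a common vertical line; the path of $C$ is $\pi(C)=v_1^-v_1^+v_2^-v_2^+\cdots v_k^-v_k^+v_1^-$, with non-vertical edges $e_i=v_i^-v_i^+\subset\ell_i$. The projection $C^*$ is the $xy$-projection of $\pi(C)$, the closed polygonal path formed by the projected edges $e_i^*$. The cycle $C$ is simple if $C^*$ is non-self-crossing. A finite point set $P$ on the lines eliminates $C$ if some $e_i$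 contains a point of $P$. *)

From Stdlib Require Import Reals List Arith.
Import ListNotations.
Open Scope R_scope.

Record pt3 := mkpt { px : R; py : R; pz : R }.

Record line := mkline { lb : pt3; ld : pt3 }.

Definition lpt (l : line) (t : R) : pt3 :=
  mkpt (px (lb l) + t * px (ld l)) (py (lb l) + t * py (ld l))
       (pz (lb l) + t * pz (ld l)).

Definition on_line (l : line) (p : pt3) : Prop := exists t : R, p = lpt l t.

Definition nonvertical (l : line) : Prop := px (ld l) <> 0 \/ py (ld l) <> 0.

Definition xy (p : pt3) : R * R := (px p, py p).
Definition on_proj (l : line) (q : R * R) : Prop :=
  exists t : R, xy (lpt l t) = q.

Definition xy_parallel (l1 l2 : line) : Prop :=
  px (ld l1) * py (ld l2) - py (ld l1) * px (ld l2) = 0.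

Definition general_position (n : nat) (L : nat -> line) : Prop :=
  (forall i, (i < n)%nat -> nonvertical (L i)) /\
  (forall i j, (i < n)%nat -> (j < n)%nat -> i <> j ->
     ~ (exists p, on_line (L i) p /\ on_line (L j) p)) /\
  (forall i j, (i < n)%nat -> (j < n)%nat -> i <> j -> ~ xy_parallel (L i) (L j)) /\
  (forall i j k, (i < n)%nat -> (j < n)%nat -> (k < n)%nat ->
     i <> j -> j <> k -> i <> k ->
     ~ (exists q, on_proj (L i) q /\ on_proj (L j) q /\ on_proj (L k) q)).

(* l1 ≺ l2 : the vertical line meeting both meets l2 at a higher point *)
Definition below (l1 l2 : line) : Prop :=
  exists p1 p2, on_line l1 p1 /\ on_line l2 p2 /\
    px p1 = px p2 /\ py p1 = py p2 /\ pz p1 < pz p2.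

(* parameter on l1 of the point of l1 lying vertically over/under l2 *)
Definition meet_param (l1 l2 : line) : R :=
  ((px (lb l2) - px (lb l1)) * py (ld l2) - (py (lb l2) - py (lb l1)) * px (ld l2))
  / (px (ld l1) * py (ld l2) - py (ld l1) * px (ld l2)).

(* A cycle is a list c = [l_1; ...; l_k] of indices of lines of L;
   positions are taken modulo k. *)
Definition cyc (c : list nat) (i : nat) : nat := nth (i mod length c) c 0%nat.
Definition nxt (c : list nat) (i : nat) : nat := S i mod length c.
Definition prv (c : list nat) (i : nat) : nat := (i + length c - 1) mod length c.

Definition is_cycle (n : nat) (L : nat -> line) (c : list nat) : Prop :=
  (3 <= length c)%nat /\ NoDup c /\ (forall x, In x c -> (x < n)%nat) /\
  (forall i, (i < length c)%nat -> below (L (cyc c i)) (L (cyc c (nxt c i)))).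

(* the non-vertical edge e_i = v_i^- v_i^+ of the path pi(C), as a point set *)
Definition edge (L : nat -> line) (c : list nat) (i : nat) (p : pt3) : Prop :=
  let l := L (cyc c i) in
  let tp := meet_param l (L (cyc c (nxt c i))) in
  let tm := meet_param l (L (cyc c (prv c i))) in
  exists t, Rmin tm tp <= t <= Rmax tm tp /\ p = lpt l t.

Definition pedge (L : nat -> line) (c : list nat) (i : nat) (q : R * R) : Prop :=
  exists p, edge L c i p /\ xy p = q.

(* C^* as a point set in the plane (vertical edges project to vertices) *)
Definition proj_cycle (L : nat -> line) (c : list nat) (q : R * R) : Prop :=
  exists i, (i < length c)%nat /\ pedge L c i q.

Definition self_crossing (L : nat -> line) (c : list nat) : Prop :=
  exists i j, (i < length c)%nat /\ (j < length c)%nat /\ i <> j /\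
    j <> nxt c i /\ i <> nxt c j /\
    exists q, pedge L c i q /\ pedge L c j q.

Definition simple_cycle (L : nat -> line) (c : list nat) : Prop :=
  ~ self_crossing L c.

Definition sub_cycle (L : nat -> line) (c0 c : list nat) : Prop :=
  (forall q, proj_cycle L c0 q -> proj_cycle L c q) /\
  (forall i, (i < length c0)%nat -> exists j, (j < length c)%nat /\
     forall p, edge L c0 i p -> edge L c j p).

Definition eliminates (L : nat -> line) (P : list pt3) (c : list nat) : Prop :=
  exists i p, (i < length c)%nat /\ In p P /\ edge L c i p.

From Stdlib Require Import Reals List Arith Lia Lra Classical.
Open Scope R_scope.

(* Suppose the projected edges e_i^* and e_j^* of a cycle C cross at a point q
   and, say, l_j lies below l_i over q.  Then the arc l_i, l_(i+1), ..., l_j of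
   C, closed up by l_j ≺ l_i, is again a cycle: its interior edges are edges of
   C, and its first and last edges are the pieces of e_i and e_j between q and
   their old far endpoints, because the new vertical edge stands over q.  As
   e_i and e_j are not consecutive, this arc omits at least one line of C.
   Iterating on length gives a simple sub-cycle, and a point set eliminating
   that sub-cycle meets one of its edges, which lies inside an edge of C. *)

Definition within (u v t : R) : Prop := Rmin u v <= t <= Rmax u v.

Definition segment (l : line) (u v : R) (p : pt3) : Prop :=
  exists t, within u v t /\ p = lpt l t.

Lemma within_l u v : within u v u.
Proof. split; [apply Rmin_l | apply Rmax_l]. Qed.

Lemma within_r u v : within u v v.
Proof. split; [apply Rmin_r | apply Rmax_r]. Qed.

Lemma segment_subset l u v u' v' p :
  within u v u' -> within u v v' -> segment l u' v' p -> segment l u v p.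
Proof.
  intros Hu Hv [t [Ht ->]]; exists t; split; [|reflexivity].
  unfold within, Rmin, Rmax in *; repeat destruct Rle_dec; lra.
Qed.

Lemma segment_on_line l u v p : segment l u v p -> on_line l p.
Proof. intros [t [_ ->]]; exists t; reflexivity. Qed.

Lemma xy_parallel_sym l1 l2 : xy_parallel l1 l2 -> xy_parallel l2 l1.
Proof. unfold xy_parallel; lra. Qed.

Lemma meet_param_unique l1 l2 t s : ~ xy_parallel l1 l2 ->
  xy (lpt l1 t) = xy (lpt l2 s) -> t = meet_param l1 l2.
Proof.
  destruct l1 as [[a1 b1 c1] [d1 e1 f1]], l2 as [[a2 b2 c2] [d2 e2 f2]].
  unfold xy_parallel, xy, lpt, meet_param; simpl; intros Hpar E.
  injection E as Ex Ey.
  apply (Rmult_eq_reg_r (d1 * e2 - e1 * d2)); [|exact Hpar].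
  unfold Rdiv; rewrite Rmult_assoc, Rinv_l, Rmult_1_r by exact Hpar.
  replace a2 with (a1 + t * d1 - s * d2) by lra.
  replace b2 with (b1 + t * e1 - s * e2) by lra.
  ring.
Qed.

Lemma segment_meet_param l l' u v p p' : ~ xy_parallel l l' ->
  segment l u v p -> on_line l' p' -> xy p = xy p' -> within u v (meet_param l l').
Proof.
  intros Hpar [t [Ht ->]] [s ->] E.
  rewrite <- (meet_param_unique l l' t s Hpar E); exact Ht.
Qed.

Lemma below_total l1 l2 p1 p2 : ~ (exists p, on_line l1 p /\ on_line l2 p) ->
  on_line l1 p1 -> on_line l2 p2 -> xy p1 = xy p2 -> below l1 l2 \/ below l2 l1.
Proof.
  destruct p1 as [x1 y1 z1], p2 as [x2 y2 z2]; unfold xy; simpl.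
  intros Hdisj H1 H2 E; injection E as -> ->.
  destruct (Rtotal_order z1 z2) as [Hlt | [-> | Hgt]].
  - left; exists (mkpt x2 y2 z1), (mkpt x2 y2 z2); simpl; auto.
  - exfalso; apply Hdisj; eauto.
  - right; exists (mkpt x2 y2 z2), (mkpt x2 y2 z1); simpl; auto.
Qed.

(* The edge on l_b of a path visiting l_a, l_b, l_c in this order. *)
Definition edge_between (L : nat -> line) (a b c : nat) : pt3 -> Prop :=
  segment (L b) (meet_param (L b) (L a)) (meet_param (L b) (L c)).

Lemma edge_between_shrink_l L a a' b c p :
  within (meet_param (L b) (L a)) (meet_param (L b) (L c)) (meet_param (L b) (L a')) ->
  edge_between L a' b c p -> edge_between L a b c p.
Proof. intros H; apply segment_subset; [exact H | apply within_r]. Qed.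

Lemma edge_between_shrink_r L a b c c' p :
  within (meet_param (L b) (L a)) (meet_param (L b) (L c)) (meet_param (L b) (L c')) ->
  edge_between L a b c' p -> edge_between L a b c p.
Proof. intros H; apply segment_subset; [apply within_l | exact H]. Qed.

Lemma mod_small_or_sub x k : (x < 2 * k)%nat ->
  (x < k /\ x mod k = x)%nat \/ (k <= x /\ x mod k = x - k)%nat.
Proof.
  intros Hx; destruct (Nat.lt_ge_cases x k).
  - left; split; [|apply Nat.mod_small]; lia.
  - right; split; [lia|].
    rewrite <- (Nat.mod_small (x - k) k), <- (Nat.Div0.mod_add (x - k) 1 k) by lia.
    f_equal; lia.
Qed.

Lemma mod_wrap x k : (k <= x < 2 * k)%nat -> (x mod k = x - k)%nat.
Proof. intros Hx; destruct (mod_small_or_sub x k); lia. Qed.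

Lemma nonadjacent_gap i j k : (i < k)%nat -> (j < k)%nat -> i <> j ->
  j <> (S i mod k)%nat -> i <> (S j mod k)%nat ->
  exists d, (2 <= d)%nat /\ (d + 2 <= k)%nat /\ ((i + d) mod k)%nat = j.
Proof.
  intros Hi Hj Hij Hji Hij'; exists ((j + k - i) mod k)%nat.
  destruct (mod_small_or_sub (S i) k), (mod_small_or_sub (S j) k),
    (mod_small_or_sub (j + k - i) k); try lia;
    destruct (mod_small_or_sub (i + (j + k - i) mod k) k); lia.
Qed.

Section CyclicIndex.
Variable c : list nat.

Lemma cyc_mod x : cyc c (x mod length c) = cyc c x.
Proof. unfold cyc; rewrite Nat.Div0.mod_mod; reflexivity. Qed.

Lemma cyc_add_mod x y : cyc c (x mod length c + y) = cyc c (x + y).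
Proof. unfold cyc; rewrite Nat.Div0.add_mod_idemp_l; reflexivity. Qed.

Lemma cyc_succ_mod x : cyc c (S (x mod length c)) = cyc c (S x).
Proof.
  rewrite <- (Nat.add_1_r (x mod length c)), <- (Nat.add_1_r x); apply cyc_add_mod.
Qed.

Lemma cyc_nxt x : cyc c (nxt c x) = cyc c (S x).
Proof. apply cyc_mod. Qed.

Hypothesis c_nonempty : length c <> 0%nat.

Lemma cyc_in x : In (cyc c x) c.
Proof. apply nth_In, Nat.mod_upper_bound, c_nonempty. Qed.

Lemma cyc_pred x : (1 <= x)%nat -> cyc c (x + (length c - 1)) = cyc c (x - 1).
Proof.
  intros Hx; unfold cyc; replace (x + (length c - 1))%nat with (x - 1 + length c)%nat by lia.
  rewrite <- Nat.Div0.add_mod_idemp_r, Nat.Div0.mod_same, Nat.add_0_r; reflexivity.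
Qed.

Lemma cyc_injective x y : NoDup c ->
  cyc c x = cyc c y -> (x mod length c = y mod length c)%nat.
Proof.
  intros Hnd E; apply (proj1 (NoDup_nth c 0%nat) Hnd); auto;
    apply Nat.mod_upper_bound, c_nonempty.
Qed.

Lemma edge_as_between L x :
  edge L c x = edge_between L (cyc c (x + (length c - 1))) (cyc c x) (cyc c (S x)).
Proof.
  unfold edge, prv; cbv zeta; rewrite cyc_nxt, cyc_mod.
  replace (x + length c - 1)%nat with (x + (length c - 1))%nat by lia.
  reflexivity.
Qed.

Lemma edge_mod L x : edge L c (x mod length c) = edge L c x.
Proof. rewrite !edge_as_between, cyc_add_mod, cyc_mod, cyc_succ_mod; reflexivity. Qed.

End CyclicIndex.

Lemma cyc_neq n L c i j : is_cycle n L c ->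
  (i < length c)%nat -> (j < length c)%nat -> i <> j -> cyc c i <> cyc c j.
Proof.
  intros [Hk [Hnd _]] Hi Hj Hij E; apply Hij.
  rewrite <- (Nat.mod_small i (length c)), <- (Nat.mod_small j (length c)) by assumption.
  apply cyc_injective; [lia | assumption..].
Qed.

Lemma pedge_on_line L c i q : pedge L c i q ->
  exists p, on_line (L (cyc c i)) p /\ xy p = q.
Proof. intros [p [[t [_ ->]] Hq]]; exists (lpt (L (cyc c i)) t); split; [exists t|]; auto. Qed.

Definition arc (c : list nat) (i d : nat) : list nat :=
  map (fun m => cyc c (i + m)) (seq 0 (S d)).

Lemma length_arc c i d : length (arc c i d) = S d.
Proof. unfold arc; rewrite length_map, length_seq; reflexivity. Qed.

Lemma cyc_arc c i d y : cyc (arc c i d) y = cyc c (i + y mod S d).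
Proof.
  unfold cyc at 1; rewrite length_arc; unfold arc.
  set (f := fun m => cyc c (i + m)).
  rewrite nth_indep with (d' := f 0%nat),
    map_nth, seq_nth by (rewrite ?length_map, ?length_seq; apply Nat.mod_upper_bound; lia).
  reflexivity.
Qed.

Lemma arc_incl c i d : length c <> 0%nat -> incl (arc c i d) c.
Proof. intros Hk x Hx; apply in_map_iff in Hx as [m [<- _]]; apply cyc_in, Hk. Qed.

Lemma arc_NoDup c i d : NoDup c ->
  (i < length c)%nat -> (d < length c)%nat -> NoDup (arc c i d).
Proof.
  intros Hnd Hi Hd; apply NoDup_map_NoDup_ForallPairs; [|apply seq_NoDup].
  intros a b Ha Hb E; apply in_seq in Ha, Hb.
  apply (cyc_injective c ltac:(lia) _ _ Hnd) in E.
  destruct (mod_small_or_sub (i + a) (length c)), (mod_small_or_sub (i + b) (length c)); lia.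
Qed.

Lemma edge_arc L c i d m : edge L (arc c i d) m =
  edge_between L (cyc c (i + (m + d) mod S d)) (cyc c (i + m mod S d))
    (cyc c (i + S m mod S d)).
Proof.
  rewrite edge_as_between, length_arc, !cyc_arc by (rewrite length_arc; lia).
  replace (S d - 1)%nat with d by lia; reflexivity.
Qed.

Lemma arc_is_cycle n L c i d : is_cycle n L c ->
  (i < length c)%nat -> (2 <= d < length c)%nat ->
  below (L (cyc c (i + d))) (L (cyc c i)) -> is_cycle n L (arc c i d).
Proof.
  intros [Hk [Hnd [Hlt Hbelow]]] Hi Hd Hclose.
  assert (Hc : length c <> 0%nat) by lia.
  split; [rewrite length_arc; lia|].
  split; [apply arc_NoDup; auto; lia|].
  split; [intros x Hx; apply Hlt, (arc_incl c i d Hc), Hx|].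
  rewrite length_arc; intros m Hm.
  rewrite cyc_nxt, !cyc_arc, (Nat.mod_small m) by lia.
  destruct (Nat.eq_dec m d) as [-> | Hmd].
  - rewrite Nat.Div0.mod_same, Nat.add_0_r; exact Hclose.
  - rewrite (Nat.mod_small (S m)), Nat.add_succ_r by lia.
    specialize (Hbelow ((i + m) mod length c) (Nat.mod_upper_bound _ _ Hc)).
    rewrite cyc_nxt, cyc_mod, cyc_succ_mod in Hbelow; exact Hbelow.
Qed.

Lemma sub_cycle_of_edges L c0 c :
  (forall i, (i < length c0)%nat -> exists j, (j < length c)%nat /\
     forall p, edge L c0 i p -> edge L c j p) -> sub_cycle L c0 c.
Proof.
  intros H; split; [|exact H].
  intros q [i [Hi [p [Hp Hq]]]]; destruct (H i Hi) as [j [Hj Hsub]].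
  exists j; split; [exact Hj|]; exists p; auto.
Qed.

Lemma sub_cycle_refl L c : sub_cycle L c c.
Proof. split; [auto|]; intros i Hi; exists i; auto. Qed.

Lemma sub_cycle_trans L c1 c2 c3 :
  sub_cycle L c1 c2 -> sub_cycle L c2 c3 -> sub_cycle L c1 c3.
Proof.
  intros [Hp12 He12] [Hp23 He23]; split; [auto|].
  intros i Hi; destruct (He12 i Hi) as [j [Hj Hij]], (He23 j Hj) as [m [Hm Hjm]].
  exists m; auto.
Qed.

Lemma eliminates_sub_cycle L P c0 c :
  sub_cycle L c0 c -> eliminates L P c0 -> eliminates L P c.
Proof.
  intros [_ He] [i [p [Hi [HP Hp]]]]; destruct (He i Hi) as [j [Hj Hsub]].
  exists j, p; auto.
Qed.

Lemma arc_sub_cycle L c i d q : length c <> 0%nat -> (1 <= d)%nat ->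
  ~ xy_parallel (L (cyc c i)) (L (cyc c (i + d))) ->
  pedge L c i q -> pedge L c (i + d) q -> sub_cycle L (arc c i d) c.
Proof.
  intros Hk Hd Hpar [p1 [E1 X1]] [p2 [E2 X2]].
  rewrite edge_as_between in E1, E2 by exact Hk.
  assert (Wi := segment_meet_param _ _ _ _ _ _ Hpar E1 (segment_on_line _ _ _ _ E2)
                  ltac:(congruence)).
  assert (Wj := segment_meet_param _ _ _ _ _ _ (fun H => Hpar (xy_parallel_sym _ _ H)) E2
                  (segment_on_line _ _ _ _ E1) ltac:(congruence)).
  clear E1 E2.
  apply sub_cycle_of_edges; rewrite length_arc; intros m Hm.
  exists ((i + m) mod length c)%nat; split; [apply Nat.mod_upper_bound, Hk|].
  intros p; rewrite edge_mod, edge_arc, edge_as_between, (Nat.mod_small m) by (exact Hk || lia).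
  destruct (Nat.eq_dec m 0) as [-> | Hm0]; [|destruct (Nat.eq_dec m d) as [-> | Hmd]].
  - rewrite (Nat.mod_small (0 + d)), (Nat.mod_small 1), !Nat.add_0_r, Nat.add_1_r by lia.
    apply edge_between_shrink_l, Wi.
  - rewrite mod_wrap, Nat.Div0.mod_same, Nat.add_0_r, cyc_pred by (exact Hk || lia).
    rewrite cyc_pred in Wj by (exact Hk || lia).
    replace (i + (d + d - S d))%nat with (i + d - 1)%nat by lia.
    apply edge_between_shrink_r, Wj.
  - rewrite mod_wrap, (Nat.mod_small (S m)), cyc_pred, Nat.add_succ_r by (exact Hk || lia).
    replace (i + (m + d - S d))%nat with (i + m - 1)%nat by lia.
    exact (fun H => H).
Qed.

Lemma shortcut_of_crossing n L c i j q : general_position n L -> is_cycle n L c ->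
  (i < length c)%nat -> (j < length c)%nat -> i <> j ->
  j <> nxt c i -> i <> nxt c j -> pedge L c i q -> pedge L c j q ->
  below (L (cyc c j)) (L (cyc c i)) ->
  exists c0, is_cycle n L c0 /\ incl c0 c /\ (length c0 < length c)%nat /\
             sub_cycle L c0 c.
Proof.
  intros [_ [_ [Hnonpar _]]] Hc Hi Hj Hij Hji Hij' Pi Pj Hb.
  pose proof Hc as [Hk3 [_ [Hlt _]]].
  assert (Hk : length c <> 0%nat) by lia.
  destruct (nonadjacent_gap i j (length c)) as [d [Hd2 [Hdk Hd]]]; auto.
  assert (Hcj : cyc c (i + d) = cyc c j) by (rewrite <- Hd, cyc_mod; reflexivity).
  assert (Pd : pedge L c (i + d) q)
    by (unfold pedge; rewrite <- (edge_mod c Hk L (i + d)), Hd; exact Pj).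
  exists (arc c i d); split; [|split; [|split]].
  - apply arc_is_cycle; [exact Hc | exact Hi | lia | rewrite Hcj; exact Hb].
  - apply arc_incl, Hk.
  - rewrite length_arc; lia.
  - apply (arc_sub_cycle L c i d q Hk); [lia | | exact Pi | exact Pd].
    rewrite Hcj; apply Hnonpar; try apply Hlt, cyc_in, Hk.
    exact (cyc_neq n L c i j Hc Hi Hj Hij).
Qed.

Lemma shorter_sub_cycle n L c : general_position n L -> is_cycle n L c ->
  self_crossing L c ->
  exists c0, is_cycle n L c0 /\ incl c0 c /\ (length c0 < length c)%nat /\
             sub_cycle L c0 c.
Proof.
  intros GP Hc [i [j [Hi [Hj [Hij [Hji [Hij' [q [Pi Pj]]]]]]]]].
  pose proof GP as [_ [Hdisj _]]; pose proof Hc as [Hk3 [_ [Hlt _]]].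
  destruct (pedge_on_line L c i q Pi) as [p1 [O1 X1]],
    (pedge_on_line L c j q Pj) as [p2 [O2 X2]].
  destruct (below_total (L (cyc c i)) (L (cyc c j)) p1 p2) as [Hb | Hb];
    [apply Hdisj; try apply Hlt, cyc_in; try lia; exact (cyc_neq n L c i j Hc Hi Hj Hij)
    | exact O1 | exact O2 | congruence | |].
  - apply (shortcut_of_crossing n L c j i q); auto.
  - apply (shortcut_of_crossing n L c i j q); auto.
Qed.

Lemma simple_sub_cycle n L c : general_position n L -> is_cycle n L c ->
  exists c0, is_cycle n L c0 /\ simple_cycle L c0 /\ sub_cycle L c0 c.
Proof.
  intros GP; induction c as [c IH] using (induction_ltof1 _ (@length nat)); intros Hc.
  destruct (classic (self_crossing L c)) as [Hx | Hs].
  - destruct (shorter_sub_cycle n L c GP Hc Hx) as [c1 [Hc1 [_ [Hlen Hsub1]]]].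
    destruct (IH c1 Hlen Hc1) as [c0 [Hc0 [Hs0 Hsub0]]].
    exists c0; split; [exact Hc0 | split; [exact Hs0|]].
    exact (sub_cycle_trans L c0 c1 c Hsub0 Hsub1).
  - exists c; split; [|split]; [exact Hc | exact Hs | apply sub_cycle_refl].
Qed.

Theorem mainTheorem4 (n : nat) (L : nat -> line) :
  general_position n L ->
  (forall c, is_cycle n L c -> self_crossing L c ->
     exists c0, is_cycle n L c0 /\ incl c0 c /\ (length c0 < length c)%nat /\
                sub_cycle L c0 c) /\
  (forall c, is_cycle n L c ->
     exists c0, is_cycle n L c0 /\ simple_cycle L c0 /\ sub_cycle L c0 c) /\
  (forall P : list pt3,
     (forall p, In p P -> exists i, (i < n)%nat /\ on_line (L i) p) ->
     (forall c, is_cycle n L c -> simple_cycle L c -> eliminates L P c) ->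
     forall c, is_cycle n L c -> eliminates L P c).
Proof.
  intros GP; split; [|split].
  - intros c; apply shorter_sub_cycle, GP.
  - intros c; apply simple_sub_cycle, GP.
  - intros P _ HP c Hc.
    destruct (simple_sub_cycle n L c GP Hc) as [c0 [Hc0 [Hs0 Hsub]]].
    exact (eliminates_sub_cycle L P c0 c Hsub (HP c0 Hc0 Hs0)).
Qed.
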